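(* Let $(V,E,c,p)$ be a PCSTP instance and let $\{v_i,v_j\}\in E$. If $$c(\{v_i,v_j\}) > d_{pc}(v_i,v_j),$$ then $\{v_i,v_j\}$ is not contained in any optimal solution of the instance.
   Context: A prize-collecting Steiner tree (PCSTP) instance $(V,E,c,p)$ consists of a finite, undirected, connected graph $G=(V,E)$, edge costs $c:E\to\mathbb{Q}_{>0}$ and vertex prizes $p:V\to\mathbb{Q}_{\ge 0}$. For a tree $S\subseteq G$ (connected acyclic subgraph with at least one vertex) let $C(S):=\sum_{e\in E(S)}c(e)+\sum_{v\in V\setminus V(S)}p(v)$; an optimal solution is a tree minimizing $C$. Let $T_p:=\{v\in V: p(v)>0\}$ (potential terminals). For $v_i,v_j\in V$, a finite walk $W=(v_{i_1},e_{i_1},v_{i_2},\dots,e_{i_{r-1}},v_{i_r})$ with $v_{i_1}=v_i$, $v_{i_r}=v_j$ is a prize-constrained $(v_i,v_j)$-walk if no vertex of $T_p\cup\{v_i,v_j\}$ occurs more than once in the sequence. $V(W)$, $E(W)$ denote the sets of vertices and edges of $W$. For $1\le k\le l\le r$, $W[k,l]$ denotes the subwalk $(v_{i_k},e_{i_k},\dots,v_{i_l})$ (itself a prize-constrained $(v_{i_k},v_{i_l})$-walk). The prize-collecting cost of a walk $W$ from $a$ to $b$ is $c_{pc}(W):=\sum_{e\in E(W)}c(e)-\sum_{v\in V(W)\setminus\{a,b\}}p(v)$. The prize-constrained length of a prize-constrained $(v_i,v_j)$-walk $W$ is $l_{pc}(W):=\max\{c_{pc}(W[k,l]) : 1\le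 k\le l\le r,\ v_{i_k},v_{i_l}\in T_p\cup\{v_i,v_j\}\}$. The prize-constrained distance is $d_{pc}(v_i,v_j):=\inf\{l_{pc}(W): W \text{ a prize-constrained } (v_i,v_j)\text{-walk}\}$. *)

From HB Require Import structures.
From mathcomp Require Import all_boot all_order all_algebra.
Set Implicit Arguments. Unset Strict Implicit. Unset Printing Implicit Defensive.
Import Order.TTheory GRing.Theory Num.Theory.
Local Open Scope ring_scope.

Section PCSTP.
Variable V : finType.

(* A simple undirected graph: edges are 2-element vertex sets. *)
Definition adjE (E : {set {set V}}) : rel V := fun x y => [set x; y] \in E.

Definition Tp (p : V -> rat) : {set V} := [set v | 0 < p v].

Definition tree_connected (VS : {set V}) (ES : {set {set V}}) : Prop :=
  forall u v, u \in VS -> v \in VS -> connect (adjE ES) u v.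

Definition tree_acyclic (ES : {set {set V}}) : Prop :=
  ~ (exists cyc : seq V, [&& (3 <= size cyc)%N, uniq cyc & cycle (adjE ES) cyc]).

Definition is_tree (E : {set {set V}}) (VS : {set V}) (ES : {set {set V}}) : Prop :=
  [/\ VS != set0, ES \subset E, (forall e, e \in ES -> e \subset VS),
      tree_connected VS ES & tree_acyclic ES].

Definition pcst_cost (c : {set V} -> rat) (p : V -> rat)
    (VS : {set V}) (ES : {set {set V}}) : rat :=
  \sum_(e in ES) c e + \sum_(v in ~: VS) p v.

Definition optimal (E : {set {set V}}) (c : {set V} -> rat) (p : V -> rat)
    (VS : {set V}) (ES : {set {set V}}) : Prop :=
  is_tree E VS ES /\
  forall VS' ES', is_tree E VS' ES' -> pcst_cost c p VS ES <= pcst_cost c p VS' ES'.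

Definition walk_edges (s : seq V) : seq {set V} :=
  if s is x :: t then pairmap (fun a b => [set a; b]) x t else [::].

Definition cpc (c : {set V} -> rat) (p : V -> rat) (s : seq V) : rat :=
  if s is x :: t then
    \sum_(e : {set V} | e \in walk_edges s) c e
    - \sum_(v : V | (v \in s) && (v \notin [set x; last x t])) p v
  else 0.

(* subwalk W[k,l] (0-indexed positions k <= l) *)
Definition subwalk (s : seq V) (k l : nat) : seq V := take (l - k).+1 (drop k s).

Definition pc_walk (E : {set {set V}}) (p : V -> rat) (vi vj : V) (s : seq V) : Prop :=
  exists t, s = vi :: t /\ path (adjE E) vi t /\ last vi t = vj /\
    forall x, x \in Tp p :|: [set vi; vj] -> (count_mem x s <= 1)%N.

(* The big max is seeded with c_pc(W) = c_pc(W[1,r]),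
   which is itself one of the maximised values, so this is exactly the maximum. *)
Definition lpc (c : {set V} -> rat) (p : V -> rat) (vi vj : V) (s : seq V) : rat :=
  let T := Tp p :|: [set vi; vj] in
  \big[Order.max/cpc c p s]_(k < size s)
    \big[Order.max/cpc c p s]_(l < size s |
        [&& (k <= l)%N, nth vi s k \in T & nth vi s l \in T])
      cpc c p (subwalk s k l).

(* "d_pc(vi,vj) < x", where d_pc is the infimum of l_pc over prize-constrained
   (vi,vj)-walks: by definition of the infimum, this holds iff some such walk
   has l_pc(W) < x. *)
Definition dpc_lt (E : {set {set V}}) (c : {set V} -> rat) (p : V -> rat)
    (vi vj : V) (x : rat) : Prop :=
  exists s, pc_walk E p vi vj s /\ lpc c p vi vj s < x.

End PCSTP.

From HB Require Import structures.
From mathcomp Require Import all_boot all_order all_algebra.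
From mathcomp Require Import lra zify.
Import Order.TTheory GRing.Theory Num.Theory.
Local Open Scope ring_scope.

(* Suppose an optimal tree S contains e = {vi, vj}.  Deleting e splits S into
   the side of vi and the side of vj, and a prize-constrained walk W from vi to
   vj with l_pc(W) < c(e) has to cross from one side to the other: from the last
   terminal of W on the side of vi, it reaches a first terminal on the side of vj.
   In between, W visits no vertex of S carrying a prize, so replacing e by this
   subwalk (and pruning the result to a spanning tree) gives a tree of cost at
   most C(S) - c(e) + c_pc(subwalk) <= C(S) - c(e) + l_pc(W) < C(S). *)

Section Sums.
Variables (R : realDomainType) (I : finType).
Set Implicit Arguments. Unset Strict Implicit.
Implicit Types (f : I -> R) (A B C D : {set I}).

Lemma ler_sum_setU f A B C : {in B :|: C, forall i, 0 <= f i} ->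
  A \subset B :|: C -> \sum_(i in A) f i <= \sum_(i in B) f i + \sum_(i in C) f i.
Proof.
move=> f_ge0 sABC; rewrite big_mkcond [X in _ <= X + _]big_mkcond.
rewrite [X in _ <= _ + X]big_mkcond -big_split /=; apply: ler_sum => i _.
have [iBC | iNBC] := boolP (i \in B :|: C).
  have := f_ge0 i iBC; move: iBC; rewrite inE.
  by case: (i \in A); case: (i \in B); case: (i \in C) => //= _; lra.
move: iNBC (contra (subsetP sABC i) iNBC); rewrite inE => /norP[/negbTE-> /negbTE->] /negbTE->.
by rewrite addr0.
Qed.

Lemma ler_sum_compl_setU f A D (P : pred I) : (forall i, 0 <= f i) ->
  {subset P <= D} -> {in A, forall i, P i -> f i <= 0} ->
  \sum_(i in ~: (A :|: D)) f i + \sum_(i | P i) f i <= \sum_(i in ~: A) f i.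
Proof.
move=> f_ge0 sPD fP_le0; rewrite big_mkcond [X in _ + X <= _]big_mkcond.
rewrite [X in _ <= X]big_mkcond -big_split /=; apply: ler_sum => i _.
rewrite !inE; have := f_ge0 i.
have [iA | iNA] := boolP (i \in A) => /=.
  by case: (boolP (P i)) => [/(fP_le0 i iA) | _]; lra.
have [iD | iND] := boolP (i \in D) => /=; first by case: (P i); lra.
by have /negbTE-> : ~~ P i := contra (sPD i) iND; lra.
Qed.

End Sums.

Section PCSTP.
Variables (V : finType) (c : {set V} -> rat) (p : V -> rat).
Set Implicit Arguments. Unset Strict Implicit.
Implicit Types (E ES F : {set {set V}}) (VS : {set V}) (a b u v x y z : V) (s t : seq V).

Lemma nth_subwalk x0 s k l i : (i <= l - k)%N -> nth x0 (subwalk s k l) i = nth x0 s (k + i).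
Proof. by move=> i_le; rewrite /subwalk nth_take ?ltnS // nth_drop. Qed.

Lemma mem_subwalk x0 s k l v : (k <= l)%N -> v \in subwalk s k l ->
  exists2 i, (k <= i <= l)%N & v = nth x0 s i.
Proof.
move=> kl /(nthP x0)[j]; rewrite {1}/subwalk size_take_min leq_min ltnS => /andP[j_le _] <-.
by exists (k + j); rewrite ?nth_subwalk // leq_addr /= -leq_subRL.
Qed.

Lemma subwalk_path (r : rel V) x0 s k l : sorted r s -> (k <= l < size s)%N ->
  exists t, [/\ subwalk s k l = nth x0 s k :: t, path r (nth x0 s k) t &
    last (nth x0 s k) t = nth x0 s l].
Proof.
move=> s_r /andP[kl l_s].
have w_r : sorted r (subwalk s k l) by apply/take_sorted/drop_sorted.
have size_w : size (subwalk s k l) = (l - k).+1.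
  by rewrite /subwalk size_takel // size_drop; lia.
have head_w := nth_subwalk x0 s (leq0n (l - k)); rewrite addn0 in head_w.
case: (subwalk s k l) size_w w_r head_w (nth_subwalk x0 s (leqnn (l - k))) => // y t.
move=> [size_t] y_t /= <- last_w.
by exists t; split; rewrite // -[last y t]/(last x0 (y :: t)) -nth_last /= size_t last_w subnKC.
Qed.

Lemma crossing_subwalk x0 s (a b : pred V) :
  a (head x0 s) -> b (last x0 s) -> ~~ a (last x0 s) ->
  exists k l, [/\ (k <= l < size s)%N, a (nth x0 s k), b (nth x0 s l) &
    forall v, v \in subwalk s k l -> v != nth x0 s k -> v != nth x0 s l -> ~~ a v && ~~ b v].
Proof.
move=> a_head b_last aN_last.
have s_gt0 : (0 < size s)%N by case: s a_head aN_last {b_last} => //= ->.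
have last_s : last x0 s = nth x0 s (size s).-1 by rewrite nth_last.
pose is_a i := (i < size s)%N && a (nth x0 s i).
have is_a0 : exists i, is_a i by exists 0%N; rewrite /is_a s_gt0 nth0.
have is_a_ub i : is_a i -> (i <= size s)%N by case/andP=> /ltnW.
have [k /andP[k_s a_k] k_max] := ex_maxnP is_a0 is_a_ub.
have k_lt : (k < (size s).-1)%N.
  rewrite ltn_neqAle -ltnS prednK // k_s andbT.
  by apply: contraNneq aN_last => k_last; rewrite last_s -k_last.
pose is_b i := [&& k < i, i < size s & b (nth x0 s i)]%N.
have is_b_last : exists i, is_b i by exists (size s).-1; rewrite /is_b k_lt prednK // leqnn -last_s.
have [l /and3P[kl l_s b_l] l_min] := ex_minnP is_b_last.
exists k, l; split=> //; first by rewrite ltnW.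
move=> v /(mem_subwalk x0 (ltnW kl))[i /andP[ki il] ->] vNk vNl.
have k_i : (k < i)%N by rewrite ltn_neqAle ki andbT; apply: contraNneq vNk => <-.
have i_l : (i < l)%N by rewrite ltn_neqAle il andbT; apply: contraNneq vNl => ->.
have i_s : (i < size s)%N := ltn_trans i_l l_s.
apply/andP; split; apply/negP.
  by move=> a_i; have := k_max i; rewrite /is_a i_s a_i leqNgt k_i => /(_ isT).
by move=> b_i; have := l_min i; rewrite /is_b k_i i_s b_i leqNgt i_l => /(_ isT).
Qed.

Lemma adjE_sym ES : symmetric (adjE ES).
Proof. by move=> x y; rewrite /adjE setUC. Qed.

Lemma connect_adjE_sym ES : connect_sym (adjE ES).
Proof. exact/sym_connect_sym/adjE_sym. Qed.

Lemma connect_adjE_subset E ES : ES \subset E ->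
  subrel (connect (adjE ES)) (connect (adjE E)).
Proof. by move=> sESE; apply: connect_sub => x y xy; apply/connect1/(subsetP sESE). Qed.

Lemma path_setD1_edge ES a s y z : path (adjE ES) a (rcons s z) ->
  z \notin a :: s -> last a s != y -> path (adjE (ES :\ [set z; y])) a (rcons s z).
Proof.
rewrite !rcons_path => /andP[as_ES lastz_ES] zNas lastNy; apply/andP; split.
  apply: (@sub_in_path _ (predC (pred1 z))) as_ES; last by rewrite all_predC has_pred1.
  move=> u w uNz wNz; rewrite /adjE in_setD1 => ->; rewrite andbT.
  apply/negP => /eqP uw_zy; have : z \in [set u; w] by rewrite uw_zy !inE eqxx.
  by move: uNz wNz; rewrite !inE /= ![z == _]eq_sym => /negbTE-> /negbTE->.
rewrite /adjE in_setD1 -/(adjE ES _ _) lastz_ES andbT; apply: contra_neq lastNy => lastz_zy.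
have : last a s \in [set z; y] by rewrite -lastz_zy !inE eqxx.
rewrite !inE => /orP[/eqP last_z | /eqP //].
by move: zNas; rewrite -last_z mem_last.
Qed.

Lemma cycle_edge_removable ES cyc : (3 <= size cyc)%N -> uniq cyc ->
  cycle (adjE ES) cyc ->
  exists2 e, e \in ES & subrel (connect (adjE ES)) (connect (adjE (ES :\ e))).
Proof.
case: cyc => [|z [|y s]] //= size_s /andP[zNys /andP[yNs _]] /andP[zy_ES ys_ES].
exists [set z; y] => //.
have last_s : last y s \in s by case: s size_s {ys_ES zNys yNs} => //= w s _; apply: mem_last.
have ys_ES' : path (adjE (ES :\ [set z; y])) y (rcons s z).
  by apply: path_setD1_edge => //; apply: contraNneq yNs => last_y; rewrite -last_y.
have yz : connect (adjE (ES :\ [set z; y])) y z.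
  by apply: (path_connect ys_ES'); rewrite inE mem_rcons mem_head orbT.
apply: connect_sub => u w uw; case: (eqVneq [set u; w] [set z; y]) => [uw_zy | uwNzy].
  have : u \in [set z; y] by rewrite -uw_zy !inE eqxx.
  have : w \in [set z; y] by rewrite -uw_zy !inE eqxx orbT.
  by rewrite !inE => /orP[]/eqP-> /orP[]/eqP->; rewrite // connect_adjE_sym.
by apply: connect1; rewrite /adjE in_setD1 uwNzy.
Qed.

Lemma connect_setD1_pair ES a b u : connect (adjE ES) a u ->
  connect (adjE (ES :\ [set a; b])) a u || connect (adjE (ES :\ [set a; b])) b u.
Proof.
set F := ES :\ _; pose reach w := connect (adjE F) a w || connect (adjE F) b w.
suff reach_path w s : reach w -> path (adjE ES) w s -> reach (last w s).
  by case/connectP => s a_s ->; apply: reach_path a_s; rewrite /reach connect0.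
elim: s w => [|w' s IHs] w //= reach_w /andP[ww' w's]; apply: IHs w's.
have [ww'_ab | ww'Nab] := eqVneq [set w; w'] [set a; b].
  have : w' \in [set a; b] by rewrite -ww'_ab !inE eqxx orbT.
  by rewrite !inE /reach => /orP[]/eqP->; rewrite connect0 ?orbT.
have ww'_F : adjE F w w' by rewrite /adjE in_setD1 ww'Nab.
by case/orP: reach_w => w_reach; rewrite /reach (connect_trans w_reach (connect1 ww'_F)) ?orbT.
Qed.

Lemma tree_acyclic_cut_edge ES a b : tree_acyclic ES -> [set a; b] \in ES ->
  a != b -> ~~ connect (adjE (ES :\ [set a; b])) a b.
Proof.
move=> ES_acyc ab_ES aNb; apply/negP => /connectP[s a_s b_last].
case: (shortenP a_s) b_last => s' a_s' uniq_as' _ b_last.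
have size_s' : (1 < size s')%N.
  case: s' a_s' {uniq_as'} b_last => [|w [|w' s']] //=.
    by move=> _ abE; rewrite abE eqxx in aNb.
  by rewrite andbT => aw_F bw; move: aw_F; rewrite -bw /adjE in_setD1 eqxx.
apply: ES_acyc; exists (a :: s'); apply/and3P; split=> //; rewrite /= rcons_path.
apply/andP; split; first by apply: sub_path a_s' => u v; rewrite /adjE in_setD1 => /andP[].
by rewrite -b_last /adjE setUC.
Qed.

Lemma exists_spanning_tree E VS ES : VS != set0 -> ES \subset E ->
  (forall e, e \in ES -> e \subset VS) -> tree_connected VS ES ->
  exists2 ES' : {set {set V}}, ES' \subset ES & is_tree E VS ES'.
Proof.
move=> VS_n0 sESE ES_VS ES_conn.
pose spans F := [forall (u | u \in VS), forall (v | v \in VS), connect (adjE F) u v].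
have spansP F : reflect (tree_connected VS F) (spans F).
  apply: (iffP forall_inP) => [F_conn u v uVS vVS | F_conn u uVS].
    by move/forall_inP: (F_conn u uVS); apply.
  by apply/forall_inP => v; apply: F_conn.
(* An inclusion-minimal connected edge set is acyclic: a cycle has a removable edge. *)
have [ES' /minsetP[/spansP ES'_conn ES'_min] sES'ES] := minset_exists (introT (spansP ES) ES_conn).
exists ES' => //; split=> //; first exact: subset_trans sESE.
  by move=> e /(subsetP sES'ES)/ES_VS.
move=> [cyc /and3P[size_cyc uniq_cyc cycle_cyc]].
have [e e_ES' ES'e_conn] := cycle_edge_removable size_cyc uniq_cyc cycle_cyc.
have ES'eE : ES' :\ e = ES'.
  by apply: ES'_min (subD1set _ _); apply/spansP => u v uVS vVS; apply/ES'e_conn/ES'_conn.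
by move: e_ES'; rewrite -ES'eE setD11.
Qed.

Lemma walk_edges_path x t : path (adjE [set e | e \in walk_edges (x :: t)]) x t.
Proof.
elim: t x => [|y t IHt] x //=; rewrite /adjE in_set in_cons eqxx /=.
by apply: sub_path (IHt y) => u v; rewrite /adjE !in_set /= in_cons => ->; rewrite orbT.
Qed.

Lemma walk_edges_subset E x t : path (adjE E) x t -> {subset walk_edges (x :: t) <= E}.
Proof.
elim: t x => [|y t IHt] x //= /andP[xy_E y_t] e.
by rewrite in_cons => /orP[/eqP-> // | /(IHt y y_t)].
Qed.

Lemma walk_edges_sub_vertices x t e :
  e \in walk_edges (x :: t) -> e \subset [set v | v \in x :: t].
Proof.
elim: t x => [|y t IHt] x //=; rewrite in_cons => /orP[/eqP-> | /IHt/subset_trans->//].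
  by apply/subsetP => v; rewrite !inE => /orP[]/eqP->; rewrite eqxx ?orbT.
by apply/subsetP => v; rewrite !inE => ->; rewrite orbT.
Qed.

Lemma tree_exchange E VS ES a b x t : is_tree E VS ES -> [set a; b] \in ES ->
  path (adjE E) x t -> connect (adjE (ES :\ [set a; b])) a x ->
  connect (adjE (ES :\ [set a; b])) b (last x t) ->
  exists2 ES' : {set {set V}},
    ES' \subset (ES :\ [set a; b]) :|: [set e | e \in walk_edges (x :: t)] &
    is_tree E (VS :|: [set v | v \in x :: t]) ES'.
Proof.
move=> [VS_n0 sESE ES_VS ES_conn _] ab_ES xt_E ax b_last.
set F := ES :\ _; set W := [set e | _]; set D := [set v | _].
have a_VS : a \in VS by apply: (subsetP (ES_VS _ ab_ES)); rewrite !inE eqxx.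
have lift_F := connect_adjE_subset (subsetUl F W).
have lift_W := connect_adjE_subset (subsetUr F W).
have x_last : connect (adjE W) x (last x t).
  by apply: (path_connect (walk_edges_path x t)); apply: mem_last.
have x_conn u : u \in VS :|: D -> connect (adjE (F :|: W)) x u.
  rewrite in_setU inE => /orP[u_VS | u_xt]; last exact/lift_W/(path_connect (walk_edges_path x t)).
  case/orP: (connect_setD1_pair b (ES_conn _ _ a_VS u_VS)) => [au | bu].
    by apply/lift_F; rewrite connect_adjE_sym in ax; apply: connect_trans ax au.
  apply: connect_trans (lift_W _ _ x_last) (lift_F _ _ _).
  by rewrite connect_adjE_sym in b_last; apply: connect_trans b_last bu.
apply: exists_spanning_tree.
- by apply/set0Pn; exists a; rewrite in_setU a_VS.
- apply/subsetP => e; rewrite in_setU in_setD1 inE => /orP[/andP[_ /(subsetP sESE)] // | ].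
  exact: walk_edges_subset.
- move=> e; rewrite in_setU in_setD1 inE => /orP[/andP[_ /ES_VS] | /walk_edges_sub_vertices].
    by move/subset_trans; apply; apply: subsetUl.
  by move/subset_trans; apply; apply: subsetUr.
- by move=> u v /x_conn xu /x_conn xv; rewrite connect_adjE_sym in xu; apply: connect_trans xu xv.
Qed.

Lemma cpc_subwalk_le_lpc vi vj s k l : (k <= l < size s)%N ->
  nth vi s k \in Tp p :|: [set vi; vj] -> nth vi s l \in Tp p :|: [set vi; vj] ->
  cpc c p (subwalk s k l) <= lpc c p vi vj s.
Proof.
move=> /andP[kl l_s] T_k T_l; have k_s := leq_ltn_trans kl l_s.
rewrite /lpc; apply: le_trans; last exact: (le_bigmax _ _ (Ordinal k_s)).
by apply: le_trans; last apply: (le_bigmax_cond _ (j := Ordinal l_s)); rewrite //= kl T_k.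
Qed.

Lemma pcst_cost_exchange E VS ES F a b x t :
  {in E, forall e, 0 <= c e} -> (forall v, 0 <= p v) -> ES \subset E ->
  path (adjE E) x t -> [set a; b] \in ES ->
  F \subset (ES :\ [set a; b]) :|: [set e | e \in walk_edges (x :: t)] ->
  {in VS, forall v, v \in x :: t -> v \notin [set x; last x t] -> p v <= 0} ->
  pcst_cost c p (VS :|: [set v | v \in x :: t]) F
    <= pcst_cost c p VS ES - c [set a; b] + cpc c p (x :: t).
Proof.
move=> c_ge0 p_ge0 sESE xt_E ab_ES sF p_inner.
have edges : \sum_(e in F) c e
    <= \sum_(e in ES :\ [set a; b]) c e + \sum_(e | e \in walk_edges (x :: t)) c e.
  have walk_sum : \sum_(e in [set e | e \in walk_edges (x :: t)]) c e
      = \sum_(e | e \in walk_edges (x :: t)) c e by apply: eq_bigl => e; rewrite inE.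
  rewrite -walk_sum.
  apply: ler_sum_setU sF => e; rewrite in_setU in_setD1 inE.
  by case/orP=> [/andP[_ /(subsetP sESE)] | /(walk_edges_subset xt_E)]; apply: c_ge0.
pose inner := [pred v | (v \in x :: t) && (v \notin [set x; last x t])].
have inner_xt : {subset inner <= [set v | v \in x :: t]} by move=> v /andP[xt_v _]; rewrite inE.
have inner_le0 : {in VS, forall v, inner v -> p v <= 0} by move=> v vVS /andP[]; apply: p_inner.
have prizes := ler_sum_compl_setU p_ge0 inner_xt inner_le0.
have -> : cpc c p (x :: t) = \sum_(e | e \in walk_edges (x :: t)) c e
    - \sum_(v | inner v) p v by [].
have cost_ES : \sum_(e in ES) c e = c [set a; b] + \sum_(e in ES :\ [set a; b]) c e.
  exact: big_setD1.
rewrite /pcst_cost cost_ES; lra.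
Qed.


Lemma pc_walk_crosses_cut E VS ES vi vj s :
  is_tree E VS ES -> [set vi; vj] \in ES -> vi != vj -> pc_walk E p vi vj s ->
  exists x t, [/\ cpc c p (x :: t) <= lpc c p vi vj s, path (adjE E) x t,
    connect (adjE (ES :\ [set vi; vj])) vi x,
    connect (adjE (ES :\ [set vi; vj])) vj (last x t) &
    {in VS, forall v, v \in x :: t -> v \notin [set x; last x t] -> p v <= 0}].
Proof.
move=> [_ _ ES_VS ES_conn ES_acyc] e_ES vivj [t0 [s_def [st_E [last_t0 _]]]].
set F := ES :\ [set vi; vj]; set T := Tp p :|: [set vi; vj].
have vi_VS : vi \in VS by apply: (subsetP (ES_VS _ e_ES)); rewrite !inE eqxx.
have vj_VS : vj \in VS by apply: (subsetP (ES_VS _ e_ES)); rewrite !inE eqxx orbT.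
have vj_T : vj \in T by rewrite !inE eqxx !orbT.
have cut := tree_acyclic_cut_edge ES_acyc e_ES vivj.
pose a := [pred v | (v \in T) && connect (adjE F) vi v].
pose b := [pred v | [&& v \in T, v \in VS & ~~ connect (adjE F) vi v]].
have a_vi : a vi by rewrite /= !inE eqxx orbT connect0.
have [|||k [l [kls a_k b_l inner]]] := crossing_subwalk (x0 := vi) (a := a) (b := b) (s := s);
  try by rewrite s_def /= ?last_t0 /= ?vj_T ?vj_VS ?cut.
have s_E : sorted (adjE E) s by rewrite s_def.
have [t [w_def xt_E last_xt]] := subwalk_path vi s_E kls.
have [[x_T vi_x] [y_T y_VS viNy]] := (andP a_k, and3P b_l).
have cpc_le : cpc c p (nth vi s k :: t) <= lpc c p vi vj s by rewrite -w_def cpc_subwalk_le_lpc.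
rewrite w_def -last_xt in inner; rewrite -last_xt in y_VS viNy.
exists (nth vi s k), t; split=> //.
  case/orP: (connect_setD1_pair vj (ES_conn _ _ vi_VS y_VS)) => // vi_y.
  by rewrite vi_y in viNy.
move=> v v_VS v_w; rewrite !inE negb_or => /andP[vNx vNy].
apply: contraTT (inner v v_w vNx vNy); rewrite -ltNge => p_pos.
have v_T : v \in T by rewrite !inE p_pos.
by rewrite /= v_T v_VS; case: connect.
Qed.

End PCSTP.

Theorem proposition1 (V : finType) (E : {set {set V}})
    (c : {set V} -> rat) (p : V -> rat)
    (HE : forall e, e \in E -> #|e| = 2%N)
    (Hconn : forall u v : V, connect (adjE E) u v)
    (Hc : forall e, e \in E -> 0 < c e)
    (Hp : forall v, 0 <= p v)
    (vi vj : V) (Hedge : [set vi; vj] \in E)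
    (Hd : dpc_lt E c p vi vj (c [set vi; vj])) :
  forall (VS : {set V}) (ES : {set {set V}}),
    optimal E c p VS ES -> [set vi; vj] \notin ES.
Proof.
move=> VS ES [S_tree S_opt]; apply/negP => e_ES.
have vivj : vi != vj by move: (HE _ Hedge); rewrite cards2; case: (vi != vj).
have [s [s_walk lpc_lt]] := Hd.
have [x [t [cpc_le xt_E vi_x vj_last p_inner]]] := pc_walk_crosses_cut c S_tree e_ES vivj s_walk.
have [F sF F_tree] := tree_exchange S_tree e_ES xt_E vi_x vj_last.
have [_ sESE _ _ _] := S_tree.
have := pcst_cost_exchange (fun e e_E => ltW (Hc e e_E)) Hp sESE xt_E e_ES sF p_inner.
have := S_opt _ _ F_tree.
lra.
Qed.
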